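(* Let $n,k\ge1$, $N=2^n$, and let $\mathcal{C}$ be a class of polynomials in $\mathbb{F}[X_1,\ldots,X_N]$ such that for every $F\in\mathcal{C}$, the shifted polynomial $F(X+\mathbf{1})$ (with $\mathbf{1}$ the all-ones vector) contains a monomial whose support has size at most $k$. Then for every $F\in\mathcal{C}$ with $F\not\equiv 0$, we have $F\circ\mathcal{G}^{\mathrm{SSSV}}_{n,k}(y,z)\not\equiv0$.
   Context: Let $P(z_1,\ldots,z_n,x_1,\ldots,x_n)=\prod_{i=1}^n(z_ix_i+(1-z_i))$, $Q^{\mathrm{SSV}}_{n,k}(y,z,x)=\sum_{j=1}^k y_jP(z_j,x)$ with $z_j=(z_{j,1},\ldots,z_{j,n})$, and $Q^{\mathrm{SSSV}}_{n,k}(y,z,x)=Q^{\mathrm{SSV}}_{n,k}(y,z,x)+\prod_{i=1}^n(x_i+1)$. $\mathcal{G}^{\mathrm{SSSV}}_{n,k}(y,z)$ is the coefficient vector of $Q^{\mathrm{SSSV}}_{n,k}$ viewed as a multilinear polynomial in $x$; its $2^n=N$ coordinates, indexed by subsets $S\subseteq[n]$, are identified with the variables $X_1,\ldots,X_N$ (via $i-1=\sum_{k\in S}2^{k-1}$), and $F\circ\mathcal{G}$ denotes substituting coordinate $i$ of $\mathcal{G}$ for $X_i$. The support of a monomial is the set of variables appearing in it. *)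

From HB Require Import structures.
From mathcomp Require Import all_boot all_order all_algebra.
From mathcomp Require Import mpoly.
Set Implicit Arguments. Unset Strict Implicit. Unset Printing Implicit Defensive.
Import GRing.Theory.
Local Open Scope ring_scope.

Section SSSV.
Variables (K : fieldType) (n k : nat).

Definition nvars_yz : nat := (k + k * n)%N.
Definition Ryz := {mpoly K[nvars_yz]}.

Definition yvar (j : 'I_k) : Ryz := 'X_(lshift (k * n) j).
Definition zvar (j : 'I_k) (i : 'I_n) : Ryz := 'X_(rshift k (mxvec_index j i)).

Definition Ppoly (zj : 'I_n -> Ryz) : {mpoly Ryz[n]} :=
  \prod_(i < n) (zj i *: 'X_i + (1 - zj i)%:MP).

Definition Q_SSV : {mpoly Ryz[n]} := \sum_(j < k) yvar j *: Ppoly (zvar j).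

Definition Q_SSSV : {mpoly Ryz[n]} := Q_SSV + \prod_(i < n) ('X_i + 1).

(* variable index i (0-based, i.e. X_{i+1}) <-> subset S with i = sum_{l in S} 2^l *)
Definition subset_of_index (i : 'I_(2 ^ n)) : {set 'I_n} :=
  [set l : 'I_n | odd (i %/ 2 ^ l)].

Definition mono_of_set (S : {set 'I_n}) : 'X_{1..n} :=
  [multinom ((l \in S) : nat) | l < n].

Definition G_SSSV : (2 ^ n).-tuple Ryz :=
  [tuple (Q_SSSV @_ (mono_of_set (subset_of_index i))) | i < 2 ^ n].

End SSSV.

Definition shift_ones (K : fieldType) (N : nat) (F : {mpoly K[N]}) : {mpoly K[N]} :=
  comp_mpoly [tuple ('X_i + 1) | i < N] F.

Definition mono_support (N : nat) (m : 'X_{1..N}) : {set 'I_N} :=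
  [set i : 'I_N | m i != 0%N].

From HB Require Import structures.
From mathcomp Require Import all_boot all_order all_algebra.
From mathcomp Require Import mpoly.
Import GRing.Theory.
Local Open Scope ring_scope.

(* Let m be a monomial of F(X + 1) whose support T has at most k elements.
   Specialise the seeds so that y_1, ..., y_|T| become the variables X_s,
   s in T, the remaining y_j become 0, and z_j becomes the 0/1 indicator
   vector of the subset indexed by the j-th element of T.  Then P(z_j, x) is
   the monomial x^{S_j}, so G_SSSV specialises to the tuple
   (X_s [s in T] + 1)_s, and F o G_SSSV specialises to F(X + 1) with every
   variable outside T set to 0.  That polynomial keeps the coefficient of m,
   which is non-zero. *)

Section MpolyFacts.
Context {R : comNzRingType} {n : nat}.

Lemma prod_mpolyZX (I : Type) (r : seq I) (c : I -> R) (m : I -> 'X_{1..n}) :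
  \prod_(i <- r) (c i *: 'X_[m i])
  = (\prod_(i <- r) c i) *: ('X_[\big[+%MM/0%MM]_(i <- r) m i] : {mpoly R[n]}).
Proof.
elim: r => [|x r IH]; first by rewrite !big_nil mpolyX0 scale1r.
by rewrite !big_cons IH mpolyXD -scalerAl -scalerAr scalerA.
Qed.

Lemma sumU_eq_mono_of_set (f : {ffun 'I_n -> bool}) (S : {set 'I_n}) :
  (\big[+%MM/0%MM]_(i < n) (if f i then U_(i) else 0)%MM == mono_of_set S)
  = (f == [ffun i => i \in S]).
Proof.
have sumUE l : (\big[+%MM/0%MM]_(i < n) (if f i then U_(i) else 0)%MM) l = f l.
  rewrite mnm_sumE (bigD1 l) //= big1 ?addn0.
    by case: (f l); rewrite ?mnm1E ?eqxx ?mnm0E.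
  by move=> i /negPf neq_il; case: (f i); rewrite ?mnm1E ?neq_il ?mnm0E.
apply/eqP/eqP => [eq_fS | eq_f].
  apply/ffunP => l; have := sumUE l.
  by rewrite eq_fS /mono_of_set mnmE ffunE; case: (f l); case: (l \in S).
by apply/mnmP => l; rewrite sumUE eq_f /mono_of_set mnmE ffunE.
Qed.

Lemma mcoeff_prod_affine (a b : 'I_n -> R) (S : {set 'I_n}) :
  (\prod_(i < n) (a i *: 'X_i + (b i)%:MP) : {mpoly R[n]})@_(mono_of_set S)
  = \prod_(i < n) (if i \in S then a i else b i).
Proof.
have affineE i : a i *: 'X_i + (b i)%:MP
    = \sum_(c : bool)
        (if c then a i else b i) *: ('X_[(if c then U_(i) else 0)%MM] : {mpoly R[n]}).
  by rewrite big_bool /= mpolyX0 -alg_mpolyC.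
rewrite (eq_bigr _ (fun i _ => affineE i)) bigA_distr_bigA raddf_sum /=.
under eq_bigr => f _ do rewrite prod_mpolyZX mcoeffZ mcoeffX sumU_eq_mono_of_set.
rewrite (bigD1 [ffun i => i \in S]) //= eqxx mulr1 [X in _ + X]big1 ?addr0.
  by apply: eq_bigr => i _; rewrite ffunE.
by move=> f /negPf ->; rewrite mulr0.
Qed.

End MpolyFacts.

Lemma prodr_nat_bool (R : comNzRingType) n (c : 'I_n -> bool) :
  \prod_(i < n) ((c i : nat)%:R : R) = ([forall i, c i] : nat)%:R.
Proof.
case: (boolP [forall i, c i]) => [/forallP c_all | /forallPn [i /negPf ci]].
  by rewrite big1 // => i _; rewrite c_all.
by rewrite (bigD1 i) //= ci mul0r.
Qed.

Lemma comp_mpoly_comp (R : comNzRingType) n1 n2 n3 (lq : n1.-tuple {mpoly R[n2]})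
    (lr : n2.-tuple {mpoly R[n3]}) (p : {mpoly R[n1]}) :
  comp_mpoly lr (comp_mpoly lq p)
  = comp_mpoly [tuple comp_mpoly lr (tnth lq i) | i < n1] p.
Proof.
rewrite (comp_mpolyE p lq) (comp_mpolyE p) raddf_sum /=; apply: eq_bigr => m _.
rewrite comp_mpolyZ rmorph_prod; congr (_ *: _); apply: eq_bigr => i _.
by rewrite rmorphXn tnth_mktuple.
Qed.

Section RestrictVars.
Context {R : comNzRingType} {N : nat}.
Variable T : {set 'I_N}.

Definition restrict_vars : N.-tuple {mpoly R[N]} :=
  [tuple if i \in T then 'X_i else 0 | i < N].

Lemma comp_restrict_varsX (m : 'X_{1..N}) :
  comp_mpoly restrict_vars 'X_[m] = if mono_support m \subset T then 'X_[m] else 0.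
Proof.
rewrite comp_mpolyX; case: ifPn => [sub_mT | /subsetPn [i im iNT]].
  rewrite [RHS]mpolyXE_id; apply: eq_bigr => i _; rewrite tnth_mktuple.
  case: ifPn => // iNT.
  have : i \notin mono_support m by apply: contra iNT; apply: (subsetP sub_mT).
  by rewrite inE negbK => /eqP ->; rewrite !expr0.
move: im; rewrite inE => mi_neq0.
by rewrite (bigD1 i) //= tnth_mktuple (negPf iNT) expr0n (negPf mi_neq0) mul0r.
Qed.

Lemma mcoeff_restrict_vars (p : {mpoly R[N]}) (m : 'X_{1..N}) :
  mono_support m \subset T -> (comp_mpoly restrict_vars p)@_m = p@_m.
Proof.
move=> sub_mT; rewrite {2}[p]mpolyE comp_mpolyEX !raddf_sum /=; apply: eq_bigr => m' _.
rewrite !mcoeffZ comp_restrict_varsX; case: ifPn => // Nsub_m'T.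
by rewrite mcoeff0 mcoeffX; case: eqP Nsub_m'T => // ->; rewrite sub_mT.
Qed.

End RestrictVars.

Lemma eq_from_bits n s t : (s < 2 ^ n)%N -> (t < 2 ^ n)%N ->
  (forall l, (l < n)%N -> odd (s %/ 2 ^ l) = odd (t %/ 2 ^ l)) -> s = t.
Proof.
elim: n s t => [|n IH] s t s_lt t_lt eq_bits.
  by move: s_lt t_lt; rewrite expn0 !ltnS !leqn0 => /eqP -> /eqP ->.
have eq_half : (s %/ 2 = t %/ 2)%N.
  apply: IH; rewrite ?ltn_divLR // -?expnSr //.
  by move=> l lt_ln; rewrite -!divnMA -expnS; apply: eq_bits.
have := eq_bits 0%N isT; rewrite expn0 !divn1 => eq_odd.
by rewrite (divn_eq s 2) (divn_eq t 2) eq_half !modn2 eq_odd.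
Qed.

Lemma subset_of_index_inj n : injective (@subset_of_index n).
Proof.
move=> s t /setP eq_st; apply/val_inj/eq_from_bits => //= l lt_ln.
by have := eq_st (Ordinal lt_ln); rewrite !inE.
Qed.

Section SeedSubstitution.
Context {K : fieldType} {n k : nat} {T : {set 'I_(2 ^ n)}}.
(* Only the default of [nth] in [slot]; it is never reached by a slot j < #|T|. *)
Variable d : 'I_(2 ^ n).

Definition slot (j : 'I_k) : 'I_(2 ^ n) := nth d (enum T) j.

Definition slot_indicator (j : 'I_k) (i : 'I_n) : {mpoly K[2 ^ n]} :=
  ((i \in subset_of_index (slot j)) : nat)%:R.

(* Seed variable v is y_j for v = lshift _ j and z_(j,i) for v = rshift _ (mxvec_index j i);
   enum_val inverts mxvec_index. *)
Definition seed_subst : (k + k * n).-tuple {mpoly K[2 ^ n]} :=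
  [tuple match split v with
         | inl j => if (j < #|T|)%N then 'X_(slot j) else 0
         | inr r => let ji := enum_val (cast_ord (esym (mxvec_cast k n)) r) in
                    slot_indicator ji.1 ji.2
         end | v < k + k * n].

Lemma seed_subst_y j :
  comp_mpoly seed_subst (yvar K n j) = if (j < #|T|)%N then 'X_(slot j) else 0.
Proof.
rewrite /yvar comp_mpolyXU -tnth_nth tnth_mktuple.
by rewrite (unsplitK (inl _ j) : split (lshift (k * n) j) = inl j).
Qed.

Lemma seed_subst_z j i : comp_mpoly seed_subst (zvar K j i) = slot_indicator j i.
Proof.
rewrite /zvar comp_mpolyXU -tnth_nth tnth_mktuple.
rewrite (unsplitK (inr _ _) : split (rshift k (mxvec_index j i)) = inr _).
by rewrite /mxvec_index cast_ordK enum_rankK.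
Qed.

Lemma prod_slot_indicator (S : {set 'I_n}) j :
  \prod_(i < n) (if i \in S then slot_indicator j i else 1 - slot_indicator j i)
  = ((S == subset_of_index (slot j)) : nat)%:R.
Proof.
rewrite (eq_bigr (fun i => (((i \in S) == (i \in subset_of_index (slot j))) : nat)%:R)).
  rewrite prodr_nat_bool; congr (nat_of_bool _)%:R.
  by apply/forallP/eqP => [eq_S | -> //]; apply/setP => i; apply/eqP/eq_S.
move=> i _; rewrite /slot_indicator.
by case: (i \in S); case: (i \in subset_of_index _); rewrite /= ?subrr ?subr0.
Qed.

Hypothesis card_T : (#|T| <= k)%N.

Lemma sum_slots (s : 'I_(2 ^ n)) :
  \sum_(j < k) (if (j < #|T|)%N then 'X_(slot j) else 0) * ((s == slot j) : nat)%:R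
  = if s \in T then 'X_s else 0 :> {mpoly K[2 ^ n]}.
Proof.
have slot_inT (j : 'I_k) : (j < #|T|)%N -> slot j \in T.
  by move=> lt_jT; rewrite -mem_enum mem_nth -?cardE.
case: ifPn => [sT | sNT]; last first.
  apply: big1 => j _; case: ifP => [/slot_inT slotT | _]; last by rewrite mul0r.
  by case: eqP slotT sNT => [-> -> | _ _ _]; rewrite ?mulr0.
have lt_sT : (index s (enum T) < #|T|)%N by rewrite cardE index_mem mem_enum.
pose j0 : 'I_k := Ordinal (leq_trans lt_sT card_T).
have slot_j0 : slot j0 = s by rewrite /slot nth_index ?mem_enum.
rewrite (bigD1 j0) //= lt_sT slot_j0 eqxx mulr1 big1 ?addr0 // => j neq_jj0.
case: ifP => [lt_jT | _]; last by rewrite mul0r.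
case: eqP => [eq_s | _]; last by rewrite mulr0.
case/eqP: neq_jj0; apply/val_inj => /=.
by rewrite eq_s /slot index_uniq ?enum_uniq -?cardE.
Qed.

Lemma seed_subst_G_SSSV (s : 'I_(2 ^ n)) :
  comp_mpoly seed_subst (tnth (G_SSSV K n k) s) = tnth (restrict_vars T) s + 1.
Proof.
rewrite !tnth_mktuple /Q_SSSV /Q_SSV mcoeffD rmorphD !raddf_sum /=.
have -> : \prod_(i < n) ('X_i + 1)
          = \prod_(i < n) ((1 : Ryz K n k) *: 'X_i + (1 : Ryz K n k)%:MP).
  by apply: eq_bigr => i _; rewrite scale1r mpolyC1.
rewrite (mcoeff_prod_affine (fun=> 1) (fun=> 1)) [\prod_(i < n) _]big1 ?comp_mpoly1;
  last by move=> i _; case: ifP.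
congr (_ + _); rewrite -(sum_slots s); apply: eq_bigr => j _.
rewrite mcoeffZ (mcoeff_prod_affine (zvar K j) (fun i => 1 - zvar K j i)).
rewrite rmorphM rmorph_prod /= seed_subst_y -(inj_eq (@subset_of_index_inj n)).
rewrite -prod_slot_indicator; congr (_ * _); apply: eq_bigr => i _.
by case: ifP => _; rewrite ?comp_mpolyB ?comp_mpoly1 seed_subst_z.
Qed.

Lemma seed_subst_comp_G_SSSV (F : {mpoly K[2 ^ n]}) :
  comp_mpoly seed_subst (comp_mpoly (G_SSSV K n k) F)
  = comp_mpoly (restrict_vars T) (shift_ones F).
Proof.
rewrite /shift_ones !comp_mpoly_comp; congr comp_mpoly; apply: eq_from_tnth => s.
rewrite [LHS]tnth_mktuple seed_subst_G_SSSV !tnth_mktuple.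
by rewrite comp_mpolyD comp_mpoly1 comp_mpolyXU -tnth_nth tnth_mktuple.
Qed.

End SeedSubstitution.

Theorem lemma5p7 (K : fieldType) (n k : nat) (C : {mpoly K[2 ^ n]} -> Prop) :
  (1 <= n)%N -> (1 <= k)%N ->
  (forall F, C F ->
     exists2 m, m \in msupp (shift_ones F) & (#|mono_support m| <= k)%N) ->
  forall F, C F -> F != 0 -> comp_mpoly (G_SSSV K n k) F != 0.
Proof.
move=> _ _ hC F CF _; have [m m_supp card_m] := hC F CF.
have d : 'I_(2 ^ n) by exists 0%N; rewrite expn_gt0.
apply: contraTneq m_supp => FG0.
have coef_m : (shift_ones F)@_m = 0.
  rewrite -(mcoeff_restrict_vars (mono_support m) (shift_ones F) m (subxx _)).
  by rewrite -(seed_subst_comp_G_SSSV d card_m) FG0 comp_mpoly0 mcoeff0.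
by rewrite mcoeff_msupp coef_m eqxx.
Qed.
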